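(* The Fitting subgroup functorial $\mathrm{F}:G\mapsto\mathrm{F}(G)$ is the unique $\mathbb{F}$-functorial in the class of all finite soluble groups; that is, if $\gamma$ is a functorial which satisfies (F1)–(F4) for every finite soluble group $G$, then $\gamma(G)=\mathrm{F}(G)$ for every finite soluble group $G$.
   Context: All groups are finite. A functorial is a function $\theta$ assigning to each group $G$ a characteristic subgroup $\theta(G)$ such that $f(\theta(G))=\theta(f(G))$ for every isomorphism $f:G\to G^*$. For a normally hereditary homomorph $\mathfrak{X}$, a functorial $\gamma$ is an $\mathbb{F}$-functorial in $\mathfrak{X}$ if for every $\mathfrak{X}$-group $G$: (F1) $f(\gamma(G))\subseteq\gamma(f(G))$ for every epimorphism $f:G\to G^*$; (F2) $\gamma(N)\subseteq\gamma(G)$ for every $N\trianglelefteq G$; (F3) $C_G(\gamma(G))\subseteq\gamma(G)$; (F4) $\gamma(G)/\Phi(G)\subseteq\mathrm{Soc}(G/\Phi(G))$. $\mathrm{F}(G)$ is the Fitting subgroup. *)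

From mathcomp Require Import all_boot all_fingroup all_solvable.
Set Implicit Arguments. Unset Strict Implicit. Unset Printing Implicit Defensive.
Import GroupScope.
Local Open Scope group_scope.

Definition socle (gT : finGroupType) (G : {set gT}) : {set gT} :=
  << \bigcup_(M : {group gT} | minnormal M G) M >>.

Definition functorial
  (theta : forall gT : finGroupType, {group gT} -> {group gT}) : Prop :=
  (forall (gT : finGroupType) (G : {group gT}), theta gT G \char G) /\
  (forall (gT rT : finGroupType) (G : {group gT}) (f : {morphism G >-> rT}),
      isom G (f @* G) f -> f @* theta gT G = theta rT (f @* G)).

Definition F_functorial_soluble
  (gamma : forall gT : finGroupType, {group gT} -> {group gT}) : Prop :=
  [/\
      (forall (gT rT : finGroupType) (G : {group gT}) (f : {morphism G >-> rT}),
          solvable G -> f @* gamma gT G \subset gamma rT (f @* G)),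
      (forall (gT : finGroupType) (G N : {group gT}),
          solvable G -> N <| G -> gamma gT N \subset gamma gT G),
      (forall (gT : finGroupType) (G : {group gT}),
          solvable G -> 'C_G(gamma gT G) \subset gamma gT G) &
      (forall (gT : finGroupType) (G : {group gT}),
          solvable G -> gamma gT G / 'Phi(G) \subset socle (G / 'Phi(G)))].

From mathcomp Require Import all_boot all_fingroup all_solvable.
Set Implicit Arguments.
Unset Strict Implicit.
Unset Printing Implicit Defensive.
Import GroupScope.
Local Open Scope group_scope.

(* A nilpotent group N satisfies gamma(N) = N, by induction on |N|: each
   element either generates N, which is then abelian so that (F3) forces
   N \subset gamma(N), or lies in a maximal subgroup M, normal since N is
   nilpotent, and M = gamma(M) \subset gamma(N) by (F2). Applied to F(G) this
   gives F(G) \subset gamma(G) via (F2). Conversely, by (F4) gamma(G)/Phi(G)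
   lies in the socle of G/Phi(G), which for soluble G is generated by abelian
   minimal normal subgroups and so is nilpotent; and a normal subgroup that is
   nilpotent modulo Phi(G) lies in F(G): by the Frattini argument each of its
   Sylow subgroups P satisfies G = Phi(G) N_G(P) = N_G(P). *)

Section Nilpotence.

Variable gT : finGroupType.
Implicit Types G H P : {group gT}.

Lemma Phi_joing_Sylow_normal p G P :
  ('Phi(G) <*> P) <| G -> p.-Sylow('Phi(G) <*> P) P -> P <| G.
Proof.
move=> nsPhiPG sylP.
have sPG : P \subset G := subset_trans (joing_subr _ _) (normal_sub nsPhiPG).
have sPN : P \subset 'N_G(P) by rewrite subsetI sPG normG.
have defL : 'Phi(G) <*> P = 'Phi(G) * P.
  by rewrite norm_joinEr // (subset_trans sPG (normal_norm (Phi_normal G))).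
have defG : 'Phi(G) <*> 'N_G(P) = G.
  apply/eqP; rewrite eqEsubset join_subG Phi_sub subsetIl /=.
  rewrite -{1}(Frattini_arg nsPhiPG sylP) /= defL -mulgA (mulSGid sPN).
  by rewrite mul_subG ?joing_subl ?joing_subr.
by rewrite /normal sPG -(Phi_nongen defG) genGid subsetIr.
Qed.

(* The hard inclusion of Gaschuetz's F(G / Phi(G)) = F(G) / Phi(G). *)
Lemma nilpotent_quotient_Phi_sub_Fitting G H :
  H <| G -> nilpotent (H / 'Phi(G)) -> H \subset 'F(G).
Proof.
move=> nsHG nilHq.
have nPhiG := normal_norm (Phi_normal G).
set K := ('Phi(G) <*> H)%G.
have nsKG : K <| G by apply: normalY (Phi_normal G) nsHG.
have nPhiK : K \subset 'N('Phi(G)) := subset_trans (normal_sub nsKG) nPhiG.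
have nilKq : nilpotent (K / 'Phi(G)).
  by rewrite quotientYidl // (subset_trans (normal_sub nsHG) nPhiG).
apply: subset_trans (joing_subr 'Phi(G) H) _.
rewrite -(Sylow_gen K) gen_subG; apply/bigcupsP => P /SylowP [p _ sylP].
apply: Fitting_max (pgroup_nil (pHall_pgroup sylP)).
have sPK := pHall_sub sylP; have nPhiP := subset_trans sPK nPhiK.
have nsPq : P / 'Phi(G) <| G / 'Phi(G).
  rewrite (nilpotent_Hall_pcore nilKq (quotient_pHall nPhiP sylP)).
  exact: char_normal_trans (pcore_char _ _) (quotient_normal _ nsKG).
have nsPhiPG : ('Phi(G) <*> P) <| G.
  move: nsPq; rewrite -cosetpre_normal quotientK // quotientGK ?Phi_normal //.
  by rewrite norm_joinEr.
apply: Phi_joing_Sylow_normal nsPhiPG _.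
by apply: pHall_subl (joing_subr _ _) _ sylP; rewrite join_subG joing_subl sPK.
Qed.

Lemma nilpotent_maximal_normal G H : nilpotent G -> maximal H G -> H <| G.
Proof.
move=> nilG /maxgroupP [prHG maxH].
have prHN := nilpotent_proper_norm nilG prHG.
have [defN | prNG] := eqVproper (subsetIl G 'N(H)).
  by rewrite /normal (proper_sub prHG) -defN subsetIr.
have defN : 'N_G(H) = H := maxH 'N_G(H)%G prNG (proper_sub prHN).
by rewrite defN properxx in prHN.
Qed.

End Nilpotence.

(* [minnormal M G] does not ask for [M \subset G], so [socle G] is the socle
   of G only when G is the whole group; the theorem is reduced to that case
   through the isomorphism [subg G]. *)
Lemma socleT_sub_Fitting (gT : finGroupType) :
  solvable [set: gT] -> socle [set: gT] \subset 'F([set: gT]).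
Proof.
move=> solT; rewrite /socle gen_subG; apply/bigcupsP => M minM.
have [nMT _ /is_abelemP [p _ /abelem_abelian abM]] :=
  minnormal_solvable minM (subsetT M) solT.
by apply: Fitting_max _ (abelian_nil abM); rewrite /normal subsetT nMT.
Qed.

Section FFunctorial.

Variable gamma : forall gT : finGroupType, {group gT} -> {group gT}.

Hypothesis gamma_char : forall {gT} (G : {group gT}), gamma G \char G.
Hypothesis gamma_normal_mono : forall {gT} {G N : {group gT}},
  solvable G -> N <| G -> gamma N \subset gamma G.
Hypothesis gamma_self_cent : forall {gT} {G : {group gT}},
  solvable G -> 'C_G(gamma G) \subset gamma G.
Hypothesis gamma_Phi_socle : forall {gT} {G : {group gT}},
  solvable G -> gamma G / 'Phi(G) \subset socle (G / 'Phi(G)).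

Lemma gamma_nilpotent gT (G : {group gT}) :
  nilpotent G -> gamma G = G :> {set gT}.
Proof.
have [n] := ubnP #|G|; elim: n G => // n IHn G /ltnSE leGn nilG.
have solG := nilpotent_sol nilG; have sgG := char_sub (gamma_char G).
apply/eqP; rewrite eqEsubset sgG; apply/subsetP => x Gx.
have sxG : <[x]> \subset G by rewrite cycle_subG.
have [defG | [M maxM sxM]] := maximal_exists sxG.
  have abG : abelian G by rewrite -defG cycle_abelian.
  apply: (subsetP (gamma_self_cent solG)); rewrite inE Gx.
  exact: subsetP (sub_abelian_cent abG sgG) x Gx.
have prMG := maxgroupp maxM.
have defM : gamma M = M :> {set gT}.
  apply: IHn (nilpotentS (proper_sub prMG) nilG).
  exact: leq_trans (proper_card prMG) leGn.
apply: (subsetP (gamma_normal_mono solG (nilpotent_maximal_normal nilG maxM))).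
by rewrite defM (subsetP sxM) ?cycle_id.
Qed.

Lemma Fitting_sub_gamma gT (G : {group gT}) :
  solvable G -> 'F(G) \subset gamma G.
Proof.
move=> solG; rewrite -{1}(gamma_nilpotent (Fitting_nil G)).
exact: gamma_normal_mono solG (Fitting_normal G).
Qed.

Lemma gamma_sub_Fitting_setT gT (G : {group gT}) :
  G :=: [set: gT] -> solvable G -> gamma G \subset 'F(G).
Proof.
move=> /group_inj-> solT.
apply: nilpotent_quotient_Phi_sub_Fitting; first exact: char_normal.
apply: nilpotentS (gamma_Phi_socle solT) _; rewrite quotientT.
have solQ : solvable [set: coset_of 'Phi([set: gT])].
  by rewrite -quotientT quotient_sol.
exact: nilpotentS (socleT_sub_Fitting solQ) (Fitting_nil _).
Qed.

End FFunctorial.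

Theorem theorem2
  (gamma : forall gT : finGroupType, {group gT} -> {group gT}) :
  functorial gamma -> F_functorial_soluble gamma ->
  forall (gT : finGroupType) (G : {group gT}), solvable G ->
    gamma gT G = 'F(G) :> {set gT}.
Proof.
move=> [gamma_char gamma_isom] [_ F2 F3 F4] gT G solG.
apply/eqP; rewrite eqEsubset (Fitting_sub_gamma gamma_char F2 F3 solG) andbT.
have isoG : isom G (subg G @* G) (subg G).
  by apply/isomP; split; first exact: injm_subg.
have sgG : gamma gT G \subset G := char_sub (gamma_char _ G).
rewrite -(injmSK (injm_subg G) _ sgG) gamma_isom // injm_Fitting ?injm_subg //.
apply: (gamma_sub_Fitting_setT gamma_char F4 _ (morphim_sol _ solG)).
exact: im_subg.
Qed.
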